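(* Let $q_0>0$, $\alpha,\beta\in\mathbb{R}$, $\theta_+\in(0,\pi)$ with $\beta\neq2q_0\cos\theta_+$, and $$q(x,t)=q_0e^{i(\alpha t+\beta x)}\Big[\cos\theta_++i\sin\theta_+\tanh\Big(q_0\sin\theta_+\Big(x-\frac{\alpha t}{\beta-2q_0\cos\theta_+}\Big)\Big)\Big].$$ Define $s(x,t)=\int_x^\infty\partial_t\big(q(x',t)q(-x',-t)\big)\,dx'+\frac{\alpha\beta}{2}$. Then $q$ and $s$ are smooth, $q_{xt}+2sq=0$ on $\mathbb{R}^2$, $s_x=-\partial_t\big(q(x,t)q(-x,-t)\big)$, $s(-x,-t)=s(x,t)$, $s(x,t)\to\alpha\beta/2$ as $|x|\to\infty$, and $q(x,t)\to q_0e^{i(\alpha t+\beta x\pm\theta_+)}$ as $x\to\pm\infty$. *)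

From Stdlib Require Import Reals.
Open Scope R_scope.

Definition CC := (R * R)%type.
Definition Cre (z : CC) : R := fst z.
Definition Cim (z : CC) : R := snd z.
Definition Cadd (z w : CC) : CC := (Cre z + Cre w, Cim z + Cim w).
Definition Csub (z w : CC) : CC := (Cre z - Cre w, Cim z - Cim w).
Definition Copp (z : CC) : CC := (- Cre z, - Cim z).
Definition Cmul (z w : CC) : CC :=
  (Cre z * Cre w - Cim z * Cim w, Cre z * Cim w + Cim z * Cre w).
Definition RtoC (r : R) : CC := (r, 0).
Definition Cnorm (z : CC) : R := sqrt (Cre z ^ 2 + Cim z ^ 2).
Definition Cexpi (phi : R) : CC := (cos phi, sin phi).

Definition continuous2 (f : R -> R -> R) : Prop :=
  forall x t eps, 0 < eps -> exists delta, 0 < delta /\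
    forall x' t', Rabs (x' - x) < delta -> Rabs (t' - t) < delta ->
      Rabs (f x' t' - f x t) < eps.

Definition partial_x (f g : R -> R -> R) : Prop :=
  forall x t, derivable_pt_lim (fun y => f y t) x (g x t).
Definition partial_t (f g : R -> R -> R) : Prop :=
  forall x t, derivable_pt_lim (fun y => f x y) t (g x t).

(** C^infinity on R^2: all iterated partial derivatives exist and are
    (jointly) continuous; D i j is d_x^i d_t^j f. *)
Definition smooth2 (f : R -> R -> R) : Prop :=
  exists D : nat -> nat -> R -> R -> R,
    D 0%nat 0%nat = f /\
    (forall i j, partial_x (D i j) (D (S i) j)) /\
    (forall i j, partial_t (D i j) (D i (S j))) /\
    (forall i j, continuous2 (D i j)).

Definition Cre2 (f : R -> R -> CC) := fun x t => Cre (f x t).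
Definition Cim2 (f : R -> R -> CC) := fun x t => Cim (f x t).
Definition Csmooth2 (f : R -> R -> CC) : Prop :=
  smooth2 (Cre2 f) /\ smooth2 (Cim2 f).
Definition Cpartial_x (f g : R -> R -> CC) : Prop :=
  partial_x (Cre2 f) (Cre2 g) /\ partial_x (Cim2 f) (Cim2 g).
Definition Cpartial_t (f g : R -> R -> CC) : Prop :=
  partial_t (Cre2 f) (Cre2 g) /\ partial_t (Cim2 f) (Cim2 g).

Definition improper_int_to (f : R -> R) (a L : R) : Prop :=
  (forall b, a <= b -> exists _ : Riemann_integrable f a b, True) /\
  (forall eps, 0 < eps -> exists M, forall b (pr : Riemann_integrable f a b),
      a <= b -> M <= b -> Rabs (RiemannInt pr - L) < eps).
Definition Cimproper_int_to (f : R -> CC) (a : R) (L : CC) : Prop :=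
  improper_int_to (fun y => Cre (f y)) a (Cre L) /\
  improper_int_to (fun y => Cim (f y)) a (Cim L).

Definition qsol (q0 alpha beta thp : R) (x t : R) : CC :=
  Cmul (RtoC q0)
    (Cmul (Cexpi (alpha * t + beta * x))
       (cos thp,
        sin thp * tanh (q0 * sin thp *
                        (x - alpha * t / (beta - 2 * q0 * cos thp))))).

Definition qprod (q : R -> R -> CC) (x t : R) : CC := Cmul (q x t) (q (- x) (- t)).

From Stdlib Require Import Reals Lra FunctionalExtensionality.
Open Scope R_scope.

(* With phi = alpha t + beta x and psi = q0 sin theta (x - v t), v = alpha / (beta - 2 q0 cos theta),
   the real and imaginary parts of q, of q(x,t) q(-x,-t) = q0^2 (cos^2 theta + sin^2 theta tanh^2 psi)
   and of all their partial derivatives are polynomials in cos phi, sin phi and tanh psi,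
   because tanh' = 1 - tanh^2.  Such polynomials are bounded together with their partial
   derivatives, hence smooth.  The t-derivative of the product has the explicit
   x-antiderivative G = v q0^2 sin^2 theta sech^2 psi, which vanishes at infinity, so
   s = alpha beta / 2 - G; the equation q_xt + 2 s q = 0 is then a polynomial identity, and the
   limits follow from tanh psi -> +-1. *)

Lemma cosh_pos y : 0 < cosh y.
Proof. unfold cosh. pose proof (exp_pos y); pose proof (exp_pos (- y)); lra. Qed.

Lemma tanh_exp y : tanh y = (exp y - exp (- y)) / (exp y + exp (- y)).
Proof.
  unfold tanh, sinh, cosh. pose proof (exp_pos y); pose proof (exp_pos (- y)).
  field; lra.
Qed.

Lemma tanh_opp y : tanh (- y) = - tanh y.
Proof.
  rewrite !tanh_exp, Ropp_involutive.
  pose proof (exp_pos y); pose proof (exp_pos (- y)). field; lra.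
Qed.

Lemma tanh_bound y : -1 <= tanh y <= 1.
Proof.
  rewrite tanh_exp. pose proof (exp_pos y); pose proof (exp_pos (- y)).
  split; apply Rmult_le_reg_r with (exp y + exp (- y)); try lra;
    unfold Rdiv; rewrite Rmult_assoc, Rinv_l; lra.
Qed.

Lemma derivable_pt_lim_tanh y : derivable_pt_lim tanh y (1 - tanh y * tanh y).
Proof.
  pose proof (cosh_pos y) as hc.
  replace (1 - tanh y * tanh y) with ((cosh y * cosh y - sinh y * sinh y) / (cosh y)²).
  - exact (derivable_pt_lim_div sinh cosh y _ _ (derivable_pt_lim_sinh y)
             (derivable_pt_lim_cosh y) (Rgt_not_eq _ _ hc)).
  - unfold tanh, Rsqr. field. lra.
Qed.

Lemma tanh_cv_1 eps : 0 < eps -> exists M, forall y, M < y -> 1 - tanh y < eps.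
Proof.
  intros he. exists (2 / eps). intros y hy.
  assert (hy0 : 0 < y) by (assert (0 < 2 / eps) by (apply Rdiv_lt_0_compat; lra); lra).
  assert (hey : 2 < eps * y).
  { apply Rmult_lt_reg_r with (/ eps); [apply Rinv_0_lt_compat; lra|].
    replace (eps * y * / eps) with y by (field; lra). exact hy. }
  pose proof (exp_ineq1 y (Rgt_not_eq _ _ hy0)).
  assert (h1 : 1 - tanh y = 2 / (exp y * exp y + 1)).
  { rewrite tanh_exp, exp_Ropp. pose proof (exp_pos y). field. nra. }
  rewrite h1. apply Rmult_lt_reg_r with (exp y * exp y + 1); [nra|].
  unfold Rdiv. rewrite Rmult_assoc, Rinv_l by nra. nra.
Qed.

Lemma tanh_affine_cv_1 k c eps : 0 < k -> 0 < eps ->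
  exists M, forall x, M < x -> 1 - tanh (k * x + c) < eps.
Proof.
  intros hk he. destruct (tanh_cv_1 eps he) as [M0 HM0].
  exists ((M0 - c) / k). intros x hx. apply HM0.
  apply Rmult_lt_compat_l with (r := k) in hx; [|exact hk].
  replace (k * ((M0 - c) / k)) with (M0 - c) in hx by (field; lra). lra.
Qed.

Lemma tanh_affine_cv_m1 k c eps : 0 < k -> 0 < eps ->
  exists M, forall x, x < - M -> 1 + tanh (k * x + c) < eps.
Proof.
  intros hk he. destruct (tanh_affine_cv_1 k (- c) eps hk he) as [M HM].
  exists M. intros x hx. specialize (HM (- x) ltac:(lra)).
  replace (k * - x + - c) with (- (k * x + c)) in HM by ring.
  rewrite tanh_opp in HM. lra.
Qed.

Lemma sech2_affine_vanishes k c eps : 0 < k -> 0 < eps ->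
  exists M, forall x, M < Rabs x -> 1 - tanh (k * x + c) * tanh (k * x + c) < eps.
Proof.
  intros hk he.
  destruct (tanh_affine_cv_1 k c (eps / 2) hk ltac:(lra)) as [M1 HM1].
  destruct (tanh_affine_cv_m1 k c (eps / 2) hk ltac:(lra)) as [M2 HM2].
  exists (Rabs M1 + Rabs M2). intros x hx.
  pose proof (tanh_bound (k * x + c)).
  set (T := tanh (k * x + c)) in *.
  replace (1 - T * T) with ((1 - T) * (1 + T)) by ring.
  pose proof (Rle_abs M1); pose proof (Rle_abs M2).
  pose proof (Rabs_pos M1); pose proof (Rabs_pos M2).
  destruct (Rle_lt_dec 0 x).
  - rewrite (Rabs_right x) in hx by lra. specialize (HM1 x ltac:(lra)); fold T in HM1.
    apply Rle_lt_trans with ((1 - T) * 2); [apply Rmult_le_compat_l|]; lra.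
  - rewrite (Rabs_left x) in hx by lra. specialize (HM2 x ltac:(lra)); fold T in HM2.
    apply Rle_lt_trans with (2 * (1 + T)); [apply Rmult_le_compat_r|]; lra.
Qed.

Lemma derivable_pt_lim_comp_affine (f f' : R -> R) c d x :
  (forall z, derivable_pt_lim f z (f' z)) ->
  derivable_pt_lim (fun y => f (c * y + d)) x (c * f' (c * x + d)).
Proof.
  intros hf.
  assert (hl : derivable_pt_lim (fun y => c * y + d) x c).
  { apply (derivable_pt_lim_ext (mult_real_fct c id + fct_cte d)%F); [reflexivity|].
    replace c with (c * 1 + 0) at 2 by ring.
    apply derivable_pt_lim_plus;
      [apply derivable_pt_lim_scal, derivable_pt_lim_id | apply derivable_pt_lim_const]. }
  rewrite Rmult_comm. exact (derivable_pt_lim_comp _ f x c _ hl (hf _)).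
Qed.

Lemma derivable_pt_lim_comp_affine' (f f' : R -> R) c d x :
  (forall z, derivable_pt_lim f z (f' z)) ->
  derivable_pt_lim (fun y => f (d + c * y)) x (c * f' (d + c * x)).
Proof.
  intros hf. rewrite Rplus_comm.
  apply (derivable_pt_lim_ext (fun y => f (c * y + d))).
  - intros y. rewrite Rplus_comm. reflexivity.
  - exact (derivable_pt_lim_comp_affine f f' c d x hf).
Qed.

(* A function with bounded partial derivatives is Lipschitz in each variable. *)
Lemma continuous2_of_bounded_partials (f fx ft : R -> R -> R) Mx Mt :
  partial_x f fx -> partial_t f ft ->
  (forall x t, Rabs (fx x t) <= Mx) -> (forall x t, Rabs (ft x t) <= Mt) ->
  continuous2 f.
Proof.
  intros hx ht bx bt x t eps he.
  assert (0 <= Mx) by (eapply Rle_trans; [apply Rabs_pos | apply (bx 0 0)]).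
  assert (0 <= Mt) by (eapply Rle_trans; [apply Rabs_pos | apply (bt 0 0)]).
  set (delta := eps / (Mx + Mt + 1)).
  assert (hd : 0 < delta) by (apply Rdiv_lt_0_compat; lra).
  exists delta. split; [exact hd|]. intros x' t' hx' ht'.
  assert (lip_x : Rabs (f x' t' - f x t') <= Mx * Rabs (x' - x)).
  { destruct (MVT_abs (fun y => f y t') (fun y => fx y t') x x') as [c [hc _]].
    - intros; apply hx.
    - rewrite hc. apply Rmult_le_compat_r; [apply Rabs_pos | apply bx]. }
  assert (lip_t : Rabs (f x t' - f x t) <= Mt * Rabs (t' - t)).
  { destruct (MVT_abs (fun y => f x y) (fun y => ft x y) t t') as [c [hc _]].
    - intros; apply ht.
    - rewrite hc. apply Rmult_le_compat_r; [apply Rabs_pos | apply bt]. }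
  replace (f x' t' - f x t) with ((f x' t' - f x t') + (f x t' - f x t)) by ring.
  eapply Rle_lt_trans; [apply Rabs_triang|].
  assert (Mx * Rabs (x' - x) <= Mx * delta) by (apply Rmult_le_compat_l; lra).
  assert (Mt * Rabs (t' - t) <= Mt * delta) by (apply Rmult_le_compat_l; lra).
  assert ((Mx + Mt) * delta < eps).
  { unfold delta. apply Rmult_lt_reg_r with (Mx + Mt + 1); [lra|].
    replace ((Mx + Mt) * (eps / (Mx + Mt + 1)) * (Mx + Mt + 1)) with ((Mx + Mt) * eps)
      by (field; lra). nra. }
  lra.
Qed.

Lemma RiemannInt_antiderivative (g G : R -> R) a b (pr : Riemann_integrable g a b) :
  a <= b -> (forall y, derivable_pt_lim G y (g y)) -> (forall y, continuity_pt g y) ->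
  RiemannInt pr = G b - G a.
Proof.
  intros hab hd hc.
  assert (hc' : forall x, a <= x <= b -> continuity_pt g x) by auto.
  rewrite (RiemannInt_P20 hab (FTC_P1 hab hc') pr).
  assert (hG : antiderivative g G a b).
  { split; [|exact hab]. intros x _. exists (exist _ (g x) (hd x)). reflexivity. }
  destruct (antiderivative_Ucte g _ _ _ _ (RiemannInt_P29 hab hc') hG) as [C hC].
  rewrite !hC; [ring | lra | lra].
Qed.

Lemma improper_int_to_antiderivative (g G : R -> R) a :
  (forall y, derivable_pt_lim G y (g y)) -> (forall y, continuity_pt g y) ->
  (forall eps, 0 < eps -> exists M, forall b, M <= b -> Rabs (G b) < eps) ->
  improper_int_to g a (- G a).
Proof.
  intros hd hc hlim. split.
  - intros b hb. exists (continuity_implies_RiemannInt hb (fun x _ => hc x)). exact I.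
  - intros eps he. destruct (hlim eps he) as [M HM]. exists M. intros b pr hab hMb.
    rewrite (RiemannInt_antiderivative g G a b pr hab hd hc).
    replace (G b - G a - - G a) with (G b) by ring. auto.
Qed.

Lemma Cnorm_scale_expi r phi z :
  Cnorm (Cmul (RtoC r) (Cmul (Cexpi phi) z)) = Rabs r * Cnorm z.
Proof.
  unfold Cnorm, Cmul, RtoC, Cexpi, Cre, Cim; cbn [fst snd].
  destruct z as [u v]; cbn [fst snd].
  pose proof (sin2_cos2 phi) as h. unfold Rsqr in h.
  replace (_ ^ 2 + _ ^ 2) with (r ^ 2 * (u ^ 2 + v ^ 2))
    by (transitivity (r ^ 2 * (u ^ 2 + v ^ 2) * (sin phi * sin phi + cos phi * cos phi));
        [rewrite h | ]; ring).
  rewrite sqrt_mult_alt by (apply pow2_ge_0).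
  rewrite <- (pow2_abs r), sqrt_pow2 by apply Rabs_pos. reflexivity.
Qed.

Lemma Cnorm_real y : Cnorm (y, 0) = Rabs y.
Proof.
  unfold Cnorm, Cre, Cim; cbn [fst snd].
  rewrite <- sqrt_Rsqr_abs. f_equal. unfold Rsqr. ring.
Qed.

Lemma Cnorm_imag y : Cnorm (0, y) = Rabs y.
Proof.
  unfold Cnorm, Cre, Cim; cbn [fst snd].
  rewrite <- sqrt_Rsqr_abs. f_equal. unfold Rsqr. ring.
Qed.

Lemma Csub_scale_expi_shift r phi c u th :
  Csub (Cmul (RtoC r) (Cmul (Cexpi phi) (c, u))) (Cmul (RtoC r) (Cexpi (phi + th)))
  = Cmul (RtoC r) (Cmul (Cexpi phi) (c - cos th, u - sin th)).
Proof.
  unfold Csub, Cmul, RtoC, Cexpi, Cre, Cim; cbn [fst snd].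
  rewrite cos_plus, sin_plus. f_equal; ring.
Qed.

Lemma derivable_pt_lim_tanh_sech2 z :
  derivable_pt_lim tanh z (1 + -1 * (tanh z * tanh z)).
Proof.
  replace (1 + -1 * (tanh z * tanh z)) with (1 - tanh z * tanh z) by ring.
  apply derivable_pt_lim_tanh.
Qed.

(* Trigonometric-hyperbolic polynomials: [Cos] and [Sin] are evaluated at the phase
   [a t + b x], [Tanh] at [k x + m t]. *)
Inductive expr :=
  | Cst (r : R) | Cos | Sin | Tanh | Add (e1 e2 : expr) | Mul (e1 e2 : expr).

Section Expressions.
Variables a b k m : R.

Fixpoint eval (e : expr) (x t : R) : R :=
  match e with
  | Cst r => r
  | Cos => cos (a * t + b * x)
  | Sin => sin (a * t + b * x)
  | Tanh => tanh (k * x + m * t)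
  | Add e1 e2 => eval e1 x t + eval e2 x t
  | Mul e1 e2 => eval e1 x t * eval e2 x t
  end.

Definition sech2 : expr := Add (Cst 1) (Mul (Cst (-1)) (Mul Tanh Tanh)).

Fixpoint deriv_x (e : expr) : expr :=
  match e with
  | Cst _ => Cst 0
  | Cos => Mul (Cst (- b)) Sin
  | Sin => Mul (Cst b) Cos
  | Tanh => Mul (Cst k) sech2
  | Add e1 e2 => Add (deriv_x e1) (deriv_x e2)
  | Mul e1 e2 => Add (Mul (deriv_x e1) e2) (Mul e1 (deriv_x e2))
  end.

Fixpoint deriv_t (e : expr) : expr :=
  match e with
  | Cst _ => Cst 0
  | Cos => Mul (Cst (- a)) Sin
  | Sin => Mul (Cst a) Cos
  | Tanh => Mul (Cst m) sech2
  | Add e1 e2 => Add (deriv_t e1) (deriv_t e2)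
  | Mul e1 e2 => Add (Mul (deriv_t e1) e2) (Mul e1 (deriv_t e2))
  end.

Lemma partial_x_eval e : partial_x (eval e) (eval (deriv_x e)).
Proof.
  intros x t. induction e; simpl.
  - apply derivable_pt_lim_const.
  - replace (- b * sin (a * t + b * x)) with (b * - sin (a * t + b * x)) by ring.
    exact (derivable_pt_lim_comp_affine' cos _ b _ x derivable_pt_lim_cos).
  - exact (derivable_pt_lim_comp_affine' sin cos b _ x derivable_pt_lim_sin).
  - exact (derivable_pt_lim_comp_affine tanh _ k _ x derivable_pt_lim_tanh_sech2).
  - exact (derivable_pt_lim_plus (fun y => eval e1 y t) (fun y => eval e2 y t) x _ _ IHe1 IHe2).
  - exact (derivable_pt_lim_mult (fun y => eval e1 y t) (fun y => eval e2 y t) x _ _ IHe1 IHe2).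
Qed.

Lemma partial_t_eval e : partial_t (eval e) (eval (deriv_t e)).
Proof.
  intros x t. induction e; simpl.
  - apply derivable_pt_lim_const.
  - replace (- a * sin (a * t + b * x)) with (a * - sin (a * t + b * x)) by ring.
    exact (derivable_pt_lim_comp_affine cos _ a _ t derivable_pt_lim_cos).
  - exact (derivable_pt_lim_comp_affine sin cos a _ t derivable_pt_lim_sin).
  - exact (derivable_pt_lim_comp_affine' tanh _ m _ t derivable_pt_lim_tanh_sech2).
  - exact (derivable_pt_lim_plus (fun y => eval e1 x y) (fun y => eval e2 x y) t _ _ IHe1 IHe2).
  - exact (derivable_pt_lim_mult (fun y => eval e1 x y) (fun y => eval e2 x y) t _ _ IHe1 IHe2).
Qed.

Lemma deriv_x_t_comm e x t : eval (deriv_t (deriv_x e)) x t = eval (deriv_x (deriv_t e)) x t.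
Proof. induction e; simpl; try ring; rewrite IHe1, IHe2; ring. Qed.

Lemma eval_deriv_x_ext e1 e2 : (forall x t, eval e1 x t = eval e2 x t) ->
  forall x t, eval (deriv_x e1) x t = eval (deriv_x e2) x t.
Proof.
  intros h x t. apply (uniqueness_limite (fun y => eval e1 y t) x); [apply partial_x_eval|].
  apply (derivable_pt_lim_ext (fun y => eval e2 y t)); [intros; symmetry; apply h|].
  apply partial_x_eval.
Qed.

Lemma deriv_t_iter_x i e x t :
  eval (deriv_t (Nat.iter i deriv_x e)) x t = eval (Nat.iter i deriv_x (deriv_t e)) x t.
Proof.
  revert x t; induction i as [|i IH]; intros x t; [reflexivity|].
  simpl. rewrite deriv_x_t_comm. apply eval_deriv_x_ext, IH.
Qed.

Fixpoint sup_bound (e : expr) : R :=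
  match e with
  | Cst r => Rabs r
  | Cos | Sin | Tanh => 1
  | Add e1 e2 => sup_bound e1 + sup_bound e2
  | Mul e1 e2 => sup_bound e1 * sup_bound e2
  end.

Lemma eval_bound e x t : Rabs (eval e x t) <= sup_bound e.
Proof.
  induction e; simpl.
  - lra.
  - apply Rabs_le, COS_bound.
  - apply Rabs_le, SIN_bound.
  - apply Rabs_le, tanh_bound.
  - eapply Rle_trans; [apply Rabs_triang | lra].
  - rewrite Rabs_mult. apply Rmult_le_compat; auto using Rabs_pos.
Qed.

Lemma eval_smooth2 e : smooth2 (eval e).
Proof.
  exists (fun i j => eval (Nat.iter i deriv_x (Nat.iter j deriv_t e))).
  split; [reflexivity|]. split; [|split].
  - intros i j. apply (partial_x_eval (Nat.iter i deriv_x (Nat.iter j deriv_t e))).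
  - intros i j x t. simpl.
    apply (derivable_pt_lim_ext (fun y => eval (Nat.iter i deriv_x (Nat.iter j deriv_t e)) x y));
      [reflexivity|].
    rewrite <- deriv_t_iter_x. apply partial_t_eval.
  - intros i j. apply (continuous2_of_bounded_partials _ _ _ _ _
      (partial_x_eval _) (partial_t_eval _) (eval_bound _) (eval_bound _)).
Qed.

End Expressions.

Section DarkSoliton.
Variables q0 alpha beta thp : R.

Definition kappa : R := q0 * sin thp.
Definition speed : R := alpha / (beta - 2 * q0 * cos thp).
Definition mu : R := - (kappa * speed).

Local Notation E := (eval alpha beta kappa mu).
Local Notation Dx := (deriv_x beta kappa).
Local Notation Dt := (deriv_t alpha mu).

Definition q_re : expr :=
  Mul (Cst q0) (Add (Mul Cos (Cst (cos thp))) (Mul (Cst (-1)) (Mul Sin (Mul (Cst (sin thp)) Tanh)))).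
Definition q_im : expr :=
  Mul (Cst q0) (Add (Mul Cos (Mul (Cst (sin thp)) Tanh)) (Mul Sin (Cst (cos thp)))).
Definition qprod_expr : expr :=
  Mul (Cst (q0 * q0)) (Add (Cst (cos thp * cos thp)) (Mul (Cst (sin thp * sin thp)) (Mul Tanh Tanh))).
(* An x-antiderivative of [Dt qprod_expr], because [mu = - kappa * speed]. *)
Definition G_expr : expr := Mul (Cst (q0 * q0 * sin thp * sin thp * speed)) sech2.
Definition s_expr : expr := Add (Cst (alpha * beta / 2)) (Mul (Cst (-1)) G_expr).

Definition qprod_t (x t : R) : CC := (E (Dt qprod_expr) x t, 0).
Definition s_sol (x t : R) : CC := (E s_expr x t, 0).

Lemma soliton_arg x t :
  q0 * sin thp * (x - alpha * t / (beta - 2 * q0 * cos thp)) = kappa * x + mu * t.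
Proof. unfold mu, kappa, speed, Rdiv. ring. Qed.

Lemma qsol_eval : qsol q0 alpha beta thp = fun x t => (E q_re x t, E q_im x t).
Proof.
  apply functional_extensionality; intro x; apply functional_extensionality; intro t.
  unfold qsol, Cmul, RtoC, Cexpi, Cre, Cim; simpl. rewrite soliton_arg. f_equal; ring.
Qed.

Lemma qprod_eval : qprod (qsol q0 alpha beta thp) = fun x t => (E qprod_expr x t, 0).
Proof.
  apply functional_extensionality; intro x; apply functional_extensionality; intro t.
  rewrite qsol_eval. unfold qprod, Cmul, Cre, Cim; simpl.
  replace (alpha * - t + beta * - x) with (- (alpha * t + beta * x)) by ring.
  replace (kappa * - x + mu * - t) with (- (kappa * x + mu * t)) by ring.
  rewrite cos_neg, sin_neg, tanh_opp.
  pose proof (sin2_cos2 (alpha * t + beta * x)) as h. unfold Rsqr in h.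
  f_equal; [|ring].
  match goal with |- _ = ?P => rewrite <- (Rmult_1_r P), <- h; ring end.
Qed.

Lemma G_expr_deriv_x x t : E (Dx G_expr) x t = E (Dt qprod_expr) x t.
Proof. unfold G_expr, qprod_expr, sech2, mu; simpl. ring. Qed.

Lemma s_expr_deriv_x x t : E (Dx s_expr) x t = - E (Dt qprod_expr) x t.
Proof. unfold s_expr, G_expr, qprod_expr, sech2, mu; simpl. ring. Qed.

Lemma s_sol_opp x t : s_sol (- x) (- t) = s_sol x t.
Proof.
  unfold s_sol, s_expr, G_expr, sech2; simpl.
  replace (kappa * - x + mu * - t) with (- (kappa * x + mu * t)) by ring.
  rewrite tanh_opp. f_equal; ring.
Qed.

Lemma qsol_smooth : Csmooth2 (qsol q0 alpha beta thp).
Proof. rewrite qsol_eval. split; apply eval_smooth2. Qed.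

Lemma s_sol_smooth : Csmooth2 s_sol.
Proof. split; [apply eval_smooth2 | exact (eval_smooth2 alpha beta kappa mu (Cst 0))]. Qed.

Lemma qprod_t_partial_t : Cpartial_t (qprod (qsol q0 alpha beta thp)) qprod_t.
Proof.
  rewrite qprod_eval. split; intros x t.
  - apply partial_t_eval.
  - apply derivable_pt_lim_const.
Qed.

Lemma s_sol_partial_x : Cpartial_x s_sol (fun x t => Copp (qprod_t x t)).
Proof.
  split; intros x t; unfold Cre2, Cim2, s_sol, qprod_t, Copp, Cre, Cim; cbn [fst snd].
  - rewrite <- s_expr_deriv_x. apply partial_x_eval.
  - rewrite Ropp_0. apply derivable_pt_lim_const.
Qed.

Hypothesis hq0 : 0 < q0.
Hypothesis hth1 : 0 < thp.
Hypothesis hth2 : thp < PI.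

Lemma kappa_pos : 0 < kappa.
Proof. apply Rmult_lt_0_compat; [exact hq0 | apply sin_gt_0; assumption]. Qed.

Lemma G_expr_vanishes t eps : 0 < eps ->
  exists M, forall x, M < Rabs x -> Rabs (E G_expr x t) < eps.
Proof.
  intros he. set (c := q0 * q0 * sin thp * sin thp * speed).
  pose proof (Rabs_pos c).
  destruct (sech2_affine_vanishes kappa (mu * t) (eps / (Rabs c + 1)) kappa_pos)
    as [M HM]; [apply Rdiv_lt_0_compat; lra|].
  exists M. intros x hx. specialize (HM x hx).
  pose proof (tanh_bound (kappa * x + mu * t)).
  unfold G_expr, sech2; simpl. fold c.
  set (T := tanh (kappa * x + mu * t)) in *.
  rewrite Rabs_mult, (Rabs_right (1 + -1 * (T * T))) by nra.
  apply Rle_lt_trans with ((Rabs c + 1) * (1 - T * T)); [nra|].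
  apply Rmult_lt_reg_l with (/ (Rabs c + 1)); [apply Rinv_0_lt_compat; lra|].
  rewrite <- Rmult_assoc, Rinv_l by lra. unfold Rdiv in HM. lra.
Qed.

Lemma qprod_t_improper_int x t :
  Cimproper_int_to (fun y => qprod_t y t) x (Csub (s_sol x t) (RtoC (alpha * beta / 2))).
Proof.
  unfold Cimproper_int_to, qprod_t, s_sol, Csub, RtoC, Cre, Cim; cbn [fst snd]. split.
  - replace (E s_expr x t - alpha * beta / 2) with (- E G_expr x t)
      by (unfold s_expr; simpl; ring).
    apply (improper_int_to_antiderivative _ (fun y => E G_expr y t)).
    + intros y. rewrite <- G_expr_deriv_x. apply partial_x_eval.
    + intros y. apply derivable_continuous_pt.
      exact (exist _ _ (partial_x_eval alpha beta kappa mu (Dt qprod_expr) y t)).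
    + intros eps he. destruct (G_expr_vanishes t eps he) as [M HM].
      exists (Rabs M + 1). intros b hb. apply HM.
      pose proof (Rle_abs b). pose proof (Rle_abs M). lra.
  - replace (0 - 0) with (- 0) by ring.
    apply (improper_int_to_antiderivative _ (fun _ => 0)).
    + intros y. apply derivable_pt_lim_const.
    + intros y. apply continuity_pt_const. intros u v. reflexivity.
    + intros eps he. exists 0. intros b _. rewrite Rabs_R0. exact he.
Qed.

Lemma s_sol_limit t eps : 0 < eps -> exists M, forall x, M < Rabs x ->
  Cnorm (Csub (s_sol x t) (RtoC (alpha * beta / 2))) < eps.
Proof.
  intros he. destruct (G_expr_vanishes t eps he) as [M HM].
  exists M. intros x hx.
  unfold s_sol, Csub, RtoC, Cre, Cim; cbn [fst snd].
  replace (E s_expr x t - alpha * beta / 2) with (- E G_expr x t)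
    by (unfold s_expr; simpl; ring).
  rewrite Rminus_diag, Cnorm_real, Rabs_Ropp. exact (HM x hx).
Qed.

Lemma Cnorm_qsol_sub_expi x t th :
  Cnorm (Csub (qsol q0 alpha beta thp x t) (Cmul (RtoC q0) (Cexpi (alpha * t + beta * x + th))))
  = q0 * Cnorm (cos thp - cos th, sin thp * tanh (kappa * x + mu * t) - sin th).
Proof.
  unfold qsol. rewrite Csub_scale_expi_shift, Cnorm_scale_expi, soliton_arg.
  rewrite Rabs_right by lra. reflexivity.
Qed.

Lemma q0_Rabs_sin_mul_lt u eps : Rabs u < eps / q0 -> q0 * Rabs (sin thp * u) < eps.
Proof.
  intros hu. assert (Rabs (sin thp) <= 1) by apply Rabs_le, SIN_bound.
  rewrite Rabs_mult. apply Rle_lt_trans with (q0 * Rabs u).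
  - apply Rmult_le_compat_l; [lra|]. pose proof (Rabs_pos u). nra.
  - apply Rmult_lt_reg_l with (/ q0); [apply Rinv_0_lt_compat; lra|].
    rewrite <- Rmult_assoc, Rinv_l by lra. unfold Rdiv in hu. lra.
Qed.

Lemma qsol_limit_plus t eps : 0 < eps -> exists M, forall x, M < x ->
  Cnorm (Csub (qsol q0 alpha beta thp x t)
           (Cmul (RtoC q0) (Cexpi (alpha * t + beta * x + thp)))) < eps.
Proof.
  intros he. destruct (tanh_affine_cv_1 kappa (mu * t) (eps / q0) kappa_pos) as [M HM];
    [apply Rdiv_lt_0_compat; lra|].
  exists M. intros x hx. specialize (HM x hx).
  pose proof (tanh_bound (kappa * x + mu * t)).
  rewrite Cnorm_qsol_sub_expi, Rminus_diag, Cnorm_imag.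
  replace (sin thp * _ - sin thp) with (sin thp * (tanh (kappa * x + mu * t) - 1)) by ring.
  apply q0_Rabs_sin_mul_lt. rewrite Rabs_left1; lra.
Qed.

Lemma qsol_limit_minus t eps : 0 < eps -> exists M, forall x, x < - M ->
  Cnorm (Csub (qsol q0 alpha beta thp x t)
           (Cmul (RtoC q0) (Cexpi (alpha * t + beta * x - thp)))) < eps.
Proof.
  intros he. destruct (tanh_affine_cv_m1 kappa (mu * t) (eps / q0) kappa_pos) as [M HM];
    [apply Rdiv_lt_0_compat; lra|].
  exists M. intros x hx. specialize (HM x hx).
  pose proof (tanh_bound (kappa * x + mu * t)).
  unfold Rminus at 1. rewrite Cnorm_qsol_sub_expi, cos_neg, Rminus_diag, Cnorm_imag, sin_neg.
  replace (sin thp * _ - - sin thp) with (sin thp * (tanh (kappa * x + mu * t) + 1)) by ring.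
  apply q0_Rabs_sin_mul_lt. rewrite Rabs_right; lra.
Qed.

Hypothesis hbeta : beta <> 2 * q0 * cos thp.

Lemma soliton_equation_eval x t :
  Cadd (E (Dt (Dx q_re)) x t, E (Dt (Dx q_im)) x t)
       (Cmul (RtoC 2) (Cmul (s_sol x t) (E q_re x t, E q_im x t))) = (0, 0).
Proof.
  assert (hD : beta - 2 * q0 * cos thp <> 0) by (intro; apply hbeta; lra).
  assert (ha : alpha = speed * (beta - 2 * q0 * cos thp)) by (unfold speed; field; exact hD).
  unfold Cadd, Cmul, RtoC, Cre, Cim, s_sol, s_expr, G_expr, q_re, q_im, sech2, mu, kappa; simpl.
  set (C := cos (alpha * t + beta * x)). set (S := sin (alpha * t + beta * x)).
  set (T := tanh (q0 * sin thp * x + - (q0 * sin thp * speed) * t)).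
  clearbody C S T. rewrite ha. f_equal; field.
Qed.

Lemma qsol_solves_equation :
  exists qx qxt : R -> R -> CC,
    Cpartial_x (qsol q0 alpha beta thp) qx /\ Cpartial_t qx qxt /\
    forall x t, Cadd (qxt x t) (Cmul (RtoC 2) (Cmul (s_sol x t) (qsol q0 alpha beta thp x t)))
                = (0, 0).
Proof.
  rewrite qsol_eval.
  exists (fun x t => (E (Dx q_re) x t, E (Dx q_im) x t)),
         (fun x t => (E (Dt (Dx q_re)) x t, E (Dt (Dx q_im)) x t)).
  split; [|split].
  - split; apply partial_x_eval.
  - split; apply partial_t_eval.
  - exact soliton_equation_eval.
Qed.

End DarkSoliton.

Theorem mainTheorem13 (q0 alpha beta thp : R)
  (hq0 : 0 < q0) (hth1 : 0 < thp) (hth2 : thp < PI)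
  (hbeta : beta <> 2 * q0 * cos thp) :
  let q := qsol q0 alpha beta thp in
  exists (Pt s : R -> R -> CC),
    Cpartial_t (qprod q) Pt /\
    (forall x t, Cimproper_int_to (fun y => Pt y t) x
                   (Csub (s x t) (RtoC (alpha * beta / 2)))) /\
    Csmooth2 q /\ Csmooth2 s /\
    (exists qx qxt : R -> R -> CC,
        Cpartial_x q qx /\ Cpartial_t qx qxt /\
        forall x t, Cadd (qxt x t) (Cmul (RtoC 2) (Cmul (s x t) (q x t))) = (0, 0)) /\
    Cpartial_x s (fun x t => Copp (Pt x t)) /\
    (forall x t, s (- x) (- t) = s x t) /\
    (forall t eps, 0 < eps -> exists M, forall x, M < Rabs x ->
        Cnorm (Csub (s x t) (RtoC (alpha * beta / 2))) < eps) /\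
    (forall t eps, 0 < eps -> exists M, forall x, M < x ->
        Cnorm (Csub (q x t)
                 (Cmul (RtoC q0) (Cexpi (alpha * t + beta * x + thp)))) < eps) /\
    (forall t eps, 0 < eps -> exists M, forall x, x < - M ->
        Cnorm (Csub (q x t)
                 (Cmul (RtoC q0) (Cexpi (alpha * t + beta * x - thp)))) < eps).
Proof.
  intros q. exists (qprod_t q0 alpha beta thp), (s_sol q0 alpha beta thp).
  split; [apply qprod_t_partial_t|].
  split; [intros x t; apply qprod_t_improper_int; assumption|].
  split; [apply qsol_smooth|].
  split; [apply s_sol_smooth|].
  split; [apply qsol_solves_equation; assumption|].
  split; [apply s_sol_partial_x|].
  split; [apply s_sol_opp|].
  split; [intros t eps; apply s_sol_limit; assumption|].
  split; [intros t eps; apply qsol_limit_plus; assumption|].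
  intros t eps; apply qsol_limit_minus; assumption.
Qed.
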